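(* Let $N$ be a prime, and for each $r\in\mathbb{Z}$ with $2\le|r|<\frac12N$, let $\gamma_{r,1}\in\Gamma_0(N)$ be a matrix with top row $\begin{pmatrix} r&-1\end{pmatrix}$. Then any matrix $\begin{pmatrix} A & B \\ CN & D \end{pmatrix} \in \Gamma_0(N)$ (with $A,B,C,D\in\mathbb{Z}$) may be written in the form $\pm\tau_1\tau_2\cdots\tau_l$ with $\tau_i\in\{T,T^{-1},W,W^{-1},\gamma_{r,1}^{-1}:2\le|r|<\frac12N\}$ for each $i=1,\ldots,l$, in such a way that $$\#\{i:\tau_i\in\{\gamma_{r,1}^{-1}\}\}\le\log_2(|A|).$$
   Context: Here $T=\begin{pmatrix}1&1\\0&1\end{pmatrix}$, $W=\begin{pmatrix}1&0\\N&1\end{pmatrix}$, and $\Gamma_0(N)$ is the usual Hecke congruence subgroup of $\mathrm{SL}_2(\mathbb{Z})$ consisting of matrices with lower-left entry divisible by $N$. *)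

From HB Require Import structures.
From mathcomp Require Import all_boot all_order all_algebra.
Set Implicit Arguments. Unset Strict Implicit. Unset Printing Implicit Defensive.
Import Order.TTheory GRing.Theory Num.Theory.
Local Open Scope ring_scope.

Definition i0 : 'I_2 := @Ordinal 2 0 isT.
Definition i1 : 'I_2 := @Ordinal 2 1 isT.

Definition mx2 (a b c d : int) : 'M[int]_2 :=
  \matrix_(i < 2, j < 2)
    if i == i0 then (if j == i0 then a else b) else (if j == i0 then c else d).

Definition Tmx : 'M[int]_2 := mx2 1 1 0 1.
Definition Wmx (N : nat) : 'M[int]_2 := mx2 1 0 N%:Z 1.

Definition inGamma0 (N : nat) (M : 'M[int]_2) : Prop :=
  \det M = 1 /\ (N%:Z %| M i1 i0)%Z.

Definition admissible_r (N : nat) (r : int) : bool :=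
  (2 <= `|r|) && (2 * `|r| < N%:Z).

Inductive gen : Type :=
  | gT | gTinv | gW | gWinv | gGinv of int.

Definition gen_ok (N : nat) (t : gen) : bool :=
  if t is gGinv r then admissible_r N r else true.

Definition gen_mx (N : nat) (gamma : int -> 'M[int]_2) (t : gen) : 'M[int]_2 :=
  match t with
  | gT => Tmx
  | gTinv => invmx Tmx
  | gW => Wmx N
  | gWinv => invmx (Wmx N)
  | gGinv r => invmx (gamma r)
  end.

Definition word_mx (N : nat) (gamma : int -> 'M[int]_2) (w : seq gen) : 'M[int]_2 :=
  foldr (fun t M => gen_mx N gamma t *m M) 1%:M w.

Definition count_gamma (w : seq gen) : nat :=
  count (fun t => if t is gGinv _ then true else false) w.

From HB Require Import structures.
From mathcomp Require Import all_boot all_order all_algebra.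
From mathcomp Require Import zify ring.
Set Implicit Arguments.
Unset Strict Implicit.
Unset Printing Implicit Defensive.

Import Order.TTheory GRing.Theory Num.Theory.
Local Open Scope ring_scope.

(* Descent on |A|.  Multiplying on the left by W^k replaces C by C - kA; taking q
   nearest to CN/A and k with r := q - kN centered mod N (so 2|r| <= N) gives
   2 |rA - (C - kA)N| <= |A|.  If |r| >= 2, then r is admissible (N is an odd prime)
   and gamma_{r,1} has top row (r, -1), so gamma_{r,1} M has top-left entry
   rA - (C - kA)N: one letter gamma_{r,1}^-1 at least halves |A|.  If |r| <= 1, then
   |(C - kA)N| < 2|A|, and reducing A modulo (C - kA)N by a power of T strictly
   decreases |A| for free.  The descent stops at |A| = 1, where M = +-W^x T^y. *)

Lemma centered_divz (a b : int) : b != 0 -> exists q, 2 * `|a - q * b| <= `|b|.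
Proof.
move=> b_neq0; have a_eq := divz_eq a b.
have := modz_ge0 a b_neq0; have := ltz_mod a b_neq0.
have [le_mb | lt_bm] := lerP (2 * (a %% b)%Z) `|b|.
  by exists (a %/ b)%Z; lia.
exists ((a %/ b)%Z + sgz b); have := abszEsg b; lia.
Qed.

Lemma trunc_log2_double_le (m n : nat) : (0 < m)%N -> (2 * m <= n)%N ->
  ((trunc_log 2 m).+1 <= trunc_log 2 n)%N.
Proof.
by move=> m_gt0 le_2m_n; rewrite -trunc_log2_double // leq_trunc_log // -mul2n.
Qed.

Lemma det_mx2 a b c d : \det (mx2 a b c d) = a * d - b * c.
Proof.
rewrite (expand_det_row _ i0) !big_ord_recl big_ord0 /cofactor !mxE /=.
by rewrite !det_mx11 !mxE /= /bump /=; ring.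
Qed.

Lemma mx2_eta (M : 'M[int]_2) : M = mx2 (M i0 i0) (M i0 i1) (M i1 i0) (M i1 i1).
Proof.
apply/matrixP => i j; rewrite mxE.
by case: i => [[|[|i]] ?]; case: j => [[|[|j]] ?] //=; congr (M _ _); exact: val_inj.
Qed.

Lemma mul_mx2 a b c d a' b' c' d' :
  mx2 a b c d *m mx2 a' b' c' d' =
  mx2 (a * a' + b * c') (a * b' + b * d') (c * a' + d * c') (c * b' + d * d').
Proof.
apply/matrixP => i j; rewrite !mxE !big_ord_recl big_ord0 !mxE /=.
by case: i => [[|[|i]] ?]; case: j => [[|[|j]] ?] //=; ring.
Qed.

Lemma mx2_1 : 1%:M = mx2 1 0 0 1.
Proof.
by apply/matrixP => i j; rewrite !mxE; case: i => [[|[|i]] ?]; case: j => [[|[|j]] ?].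
Qed.

Lemma scale_mx2 k a b c d : k *: mx2 a b c d = mx2 (k * a) (k * b) (k * c) (k * d).
Proof.
by apply/matrixP => i j; rewrite !mxE; case: i => [[|[|i]] ?]; case: j => [[|[|j]] ?].
Qed.

Lemma mulmx1_invmx (A B : 'M[int]_2) : A *m B = 1%:M -> invmx A = B.
Proof.
move=> AB1; have [A_unit _] := mulmx1_unit AB1.
by rewrite -[invmx A]mulmx1 -AB1 mulmxA mulVmx // mul1mx.
Qed.

Lemma invmx_T : invmx Tmx = mx2 1 (-1) 0 1.
Proof. by apply: mulmx1_invmx; rewrite mul_mx2 mx2_1; congr mx2; ring. Qed.

Lemma invmx_W N : invmx (Wmx N) = mx2 1 0 (- N%:Z) 1.
Proof. by apply: mulmx1_invmx; rewrite mul_mx2 mx2_1; congr mx2; ring. Qed.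

Lemma word_mx_cat N gamma w1 w2 :
  word_mx N gamma (w1 ++ w2) = word_mx N gamma w1 *m word_mx N gamma w2.
Proof. by elim: w1 => [|t w1 IHw] /=; rewrite ?mul1mx // IHw mulmxA. Qed.

Definition pow_word (t t' : gen) (k : int) : seq gen :=
  nseq `|k|%N (if 0 <= k then t else t').

Section OneParameterSubgroup.
Variables (N : nat) (gamma : int -> 'M[int]_2) (E : int -> 'M[int]_2).
Hypothesis E0 : E 0 = 1%:M.
Hypothesis ED : {morph E : x y / x + y >-> x *m y}.

Lemma word_mx_nseq t x n :
  gen_mx N gamma t = E x -> word_mx N gamma (nseq n t) = E (n%:Z * x).
Proof.
move=> Et; elim: n => [|n IHn] /=; first by rewrite mul0r E0.
by rewrite IHn Et -ED intS mulrDl mul1r.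
Qed.

Lemma word_mx_pow_word t t' k :
  gen_mx N gamma t = E 1 -> gen_mx N gamma t' = E (-1) ->
  word_mx N gamma (pow_word t t' k) = E k.
Proof.
move=> Et Et'; rewrite /pow_word; case: k => n.
  by rewrite /= (word_mx_nseq _ Et) mulr1.
by rewrite -[nseq _ _]/(nseq n.+1 t') (word_mx_nseq _ Et') NegzE mulrN1.
Qed.

End OneParameterSubgroup.

Section Gamma0Words.
Variables (N : nat) (gamma : int -> 'M[int]_2).

Definition word_rep (n : nat) (M : 'M[int]_2) : Prop :=
  exists (s : bool) (w : seq gen), all (gen_ok N) w /\
    M = (-1) ^+ s *: word_mx N gamma w /\ (count_gamma w <= n)%N.

Lemma word_rep1 : word_rep 0 1%:M.
Proof. by exists false, [::]; rewrite scale1r. Qed.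

Lemma word_rep_sign (s : bool) n M : word_rep n M -> word_rep n ((-1) ^+ s *: M).
Proof.
case=> s' [w [w_ok [-> cnt_w]]]; exists (s (+) s'), w.
by rewrite scalerA -signr_addb.
Qed.

Lemma word_rep_le m n M : (m <= n)%N -> word_rep m M -> word_rep n M.
Proof.
move=> le_mn [s [w [w_ok [-> cnt_w]]]]; exists s, w.
by split; last split; last exact: leq_trans le_mn.
Qed.

Lemma word_rep_lmul w0 n M : all (gen_ok N) w0 ->
  word_rep n M -> word_rep (count_gamma w0 + n) (word_mx N gamma w0 *m M).
Proof.
move=> w0_ok [s [w [w_ok [-> cnt_w]]]]; exists s, (w0 ++ w).
rewrite all_cat w0_ok w_ok word_mx_cat -scalemxAr /count_gamma count_cat.
by rewrite leq_add2l.
Qed.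

Lemma word_rep_lmul_free w0 n M : all (gen_ok N) w0 -> count_gamma w0 = 0%N ->
  word_rep n M -> word_rep n (word_mx N gamma w0 *m M).
Proof. by move=> w0_ok w0_free /(word_rep_lmul w0_ok); rewrite w0_free. Qed.

Lemma word_rep_lmulT k n M : word_rep n M -> word_rep n (mx2 1 k 0 1 *m M).
Proof.
have T_D : {morph (fun x => mx2 1 x 0 1) : x y / x + y >-> x *m y}.
  by move=> x y; rewrite mul_mx2; congr mx2; ring.
rewrite -(@word_mx_pow_word N gamma _ (esym mx2_1) T_D gT gTinv k) //=.
  apply: word_rep_lmul_free; rewrite /pow_word ?all_nseq /count_gamma ?count_nseq;
    by case: ifP => _; rewrite /= ?orbT ?mul0n.
by rewrite invmx_T.
Qed.

Lemma word_rep_lmulW k n M : word_rep n M -> word_rep n (mx2 1 0 (k * N%:Z) 1 *m M).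
Proof.
have W_D : {morph (fun x => mx2 1 0 (x * N%:Z) 1) : x y / x + y >-> x *m y}.
  by move=> x y; rewrite mul_mx2; congr mx2; ring.
have W_0 : mx2 1 0 (0 * N%:Z) 1 = 1%:M by rewrite mul0r mx2_1.
rewrite -(@word_mx_pow_word N gamma _ W_0 W_D gW gWinv k) /= ?mul1r ?invmx_W ?mulN1r //.
apply: word_rep_lmul_free; rewrite /pow_word ?all_nseq /count_gamma ?count_nseq;
  by case: ifP => _; rewrite /= ?orbT ?mul0n.
Qed.

Lemma word_rep_lmul_gamma r n M : admissible_r N r ->
  word_rep n M -> word_rep n.+1 (invmx (gamma r) *m M).
Proof.
move=> adm_r /(word_rep_lmul (w0 := [:: gGinv r])).
by rewrite /= adm_r /= mulmx1; apply.
Qed.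

End Gamma0Words.

Lemma unimodular_corner_neq0 (N : nat) a b c d :
  (1 < N)%N -> a * d - b * (c * N%:Z) = 1 -> a != 0.
Proof.
move=> N_gt1 det1; apply/eqP => a0.
have : (N%:Z %| 1)%Z by apply/dvdzP; exists (- (b * c)); rewrite a0 in det1; lia.
by rewrite dvdz1; lia.
Qed.

Lemma admissible_centered (N : nat) (r : int) :
  prime N -> 2 <= `|r| -> 2 * `|r| <= N%:Z -> admissible_r N r.
Proof.
move=> N_prime r_ge2 le_2r_N; apply/andP; split => //.
rewrite lt_neqAle le_2r_N andbT; apply/eqP => N_eq.
have : (2 %| N)%N by apply/dvdnP; exists `|r|%N; lia.
by move/(@prime_nt_dvdP 2 N N_prime isT); lia.
Qed.

Section Gamma0Descent.
Variables (N : nat) (gamma : int -> 'M[int]_2).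
Hypothesis N_prime : prime N.
Hypothesis gammaP : forall r : int, admissible_r N r ->
  inGamma0 N (gamma r) /\ gamma r i0 i0 = r /\ gamma r i0 i1 = -1.

Let N_gt1 : (1 < N)%N := prime_gt1 N_prime.

Lemma word_rep_unit_corner a b c d : `|a| = 1 -> a * d - b * (c * N%:Z) = 1 ->
  word_rep N gamma 0 (mx2 a b (c * N%:Z) d).
Proof.
move=> a_unit det1; have [a1|aN1] : a = 1 \/ a = -1 by lia.
- have -> : mx2 a b (c * N%:Z) d = mx2 1 0 (c * N%:Z) 1 *m (mx2 1 b 0 1 *m 1%:M).
    by rewrite mulmx1 mul_mx2; congr mx2; nia.
  exact/word_rep_lmulW/word_rep_lmulT/word_rep1.
- have -> : mx2 a b (c * N%:Z) d =
      (-1) ^+ true *: (mx2 1 0 (- c * N%:Z) 1 *m (mx2 1 (- b) 0 1 *m 1%:M)).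
    by rewrite mulmx1 mul_mx2 scale_mx2 expr1; congr mx2; nia.
  exact/word_rep_sign/word_rep_lmulW/word_rep_lmulT/word_rep1.
Qed.

Lemma gamma_reduction r a b c d : admissible_r N r -> a * d - b * (c * N%:Z) = 1 ->
  exists b' c' d', (r * a - c * N%:Z) * d' - b' * (c' * N%:Z) = 1 /\
    mx2 a b (c * N%:Z) d = invmx (gamma r) *m mx2 (r * a - c * N%:Z) b' (c' * N%:Z) d'.
Proof.
move=> adm_r det1; have [[det_g /dvdzP[g g10]] [g00 g01]] := gammaP adm_r.
set h := gamma r i1 i1.
have gammaE : gamma r = mx2 r (-1) (g * N%:Z) h by rewrite [LHS]mx2_eta g00 g01 g10.
have det_gE : r * h + g * N%:Z = 1 by move: det_g; rewrite gammaE det_mx2; lia.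
have gamma_unit : gamma r \in unitmx by rewrite unitmxE det_g unitr1.
exists (r * b - d), (g * a + h * c), (g * N%:Z * b + h * d); split.
  by rewrite -[RHS]mulr1 -{1}det_gE -det1; ring.
rewrite -[LHS](mulKmx gamma_unit); congr (_ *m _).
by rewrite [in LHS]gammaE mul_mx2; congr mx2; ring.
Qed.

Definition gamma0_word_bound (m : nat) : Prop :=
  forall a b c d, (`|a| < m)%N -> a * d - b * (c * N%:Z) = 1 ->
  word_rep N gamma (trunc_log 2 `|a|) (mx2 a b (c * N%:Z) d).

Lemma word_rep_descent_gamma r a b c d : gamma0_word_bound `|a| ->
  admissible_r N r -> a * d - b * (c * N%:Z) = 1 -> 2 * `|r * a - c * N%:Z| <= `|a| ->
  word_rep N gamma (trunc_log 2 `|a|) (mx2 a b (c * N%:Z) d).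
Proof.
move=> IH adm_r det1 le_a'_a.
have [b' [c' [d' [det1' ->]]]] := gamma_reduction adm_r det1.
have a'_neq0 := unimodular_corner_neq0 N_gt1 det1'.
apply: word_rep_le (word_rep_lmul_gamma adm_r (IH _ _ _ _ _ det1')); last by lia.
by apply: trunc_log2_double_le; lia.
Qed.

Lemma word_rep_descent_T a b c d : gamma0_word_bound `|a| -> 1 < `|a| ->
  a * d - b * (c * N%:Z) = 1 -> `|c * N%:Z| < 2 * `|a| ->
  word_rep N gamma (trunc_log 2 `|a|) (mx2 a b (c * N%:Z) d).
Proof.
move=> IH a_gt1 det1 lt_cN_a.
have cN_neq0 : c * N%:Z != 0.
  apply/eqP => cN0; have : (a %| 1)%Z by apply/dvdzP; exists d; rewrite cN0 in det1; lia.
  by rewrite dvdz1; lia.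
have [p le_a'_cN] := centered_divz a cN_neq0.
have -> : mx2 a b (c * N%:Z) d =
    mx2 1 p 0 1 *m mx2 (a - p * (c * N%:Z)) (b - p * d) (c * N%:Z) d.
  by rewrite mul_mx2; congr mx2; ring.
apply/word_rep_lmulT/(word_rep_le _ (IH _ _ _ _ _ _)); first by apply: leq_trunc_log; lia.
- by lia.
- by rewrite -det1; ring.
Qed.

Lemma word_rep_gamma0 a b c d : a * d - b * (c * N%:Z) = 1 ->
  word_rep N gamma (trunc_log 2 `|a|) (mx2 a b (c * N%:Z) d).
Proof.
have [n] := ubnP `|a|%N; elim: n => // n IHn in a b c d *; rewrite ltnS => le_a_n det1.
have IH : gamma0_word_bound `|a|.
  by move=> a' b' c' d' lt_a'_a; apply: IHn; apply: leq_trans lt_a'_a le_a_n.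
have a_neq0 := unimodular_corner_neq0 N_gt1 det1.
have [a_unit | a_gt1] : `|a| = 1 \/ 1 < `|a| by lia.
  exact: word_rep_le (word_rep_unit_corner a_unit det1).
have [q le_cN_qa] := centered_divz (c * N%:Z) a_neq0.
have [k le_r_N] : exists k, 2 * `|q - k * N%:Z| <= N%:Z.
  by have [|k] := centered_divz q (_ : N%:Z != 0); [lia | exists k; lia].
set r := q - k * N%:Z in le_r_N.
have -> : mx2 a b (c * N%:Z) d =
    mx2 1 0 (k * N%:Z) 1 *m mx2 a b ((c - k * a) * N%:Z) (d - k * N%:Z * b).
  by rewrite mul_mx2; congr mx2; ring.
apply: word_rep_lmulW.
have det1' : a * (d - k * N%:Z * b) - b * ((c - k * a) * N%:Z) = 1.
  by rewrite -det1; ring.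
have close_r : 2 * `|r * a - (c - k * a) * N%:Z| <= `|a|.
  have -> : r * a - (c - k * a) * N%:Z = - (c * N%:Z - q * a) by rewrite /r; ring.
  by rewrite normrN.
have [r_ge2 | r_le1] : 2 <= `|r| \/ `|r| <= 1 by lia.
  have adm_r := admissible_centered N_prime r_ge2 le_r_N.
  exact: word_rep_descent_gamma IH adm_r det1' close_r.
apply: word_rep_descent_T => //.
have : `|r * a| <= `|a| by rewrite normrM; nia.
lia.
Qed.

End Gamma0Descent.

Theorem lemma4p7 (N : nat) (hN : prime N) (gamma : int -> 'M[int]_2)
  (hgamma : forall r : int, admissible_r N r ->
     inGamma0 N (gamma r) /\ gamma r i0 i0 = r /\ gamma r i0 i1 = -1)
  (A B C D : int)
  (hM : inGamma0 N (mx2 A B (C * N%:Z) D)) :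
  exists (s : bool) (w : seq gen),
    all (gen_ok N) w /\
    mx2 A B (C * N%:Z) D = (-1) ^+ s *: word_mx N gamma w /\
    (count_gamma w <= trunc_log 2 `|A|)%N.
Proof.
case: hM => det1 _; rewrite det_mx2 in det1.
exact: (word_rep_gamma0 hN hgamma det1).
Qed.
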